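(* (i) $\mathcal{SC}_\alpha\subset\mathcal{L}^{1/\beta}$ for all $0<\alpha<\beta\le1$. (ii) If $X\in\mathcal{SC}_\alpha$ for some $0<\alpha<1$ and $\lim_{x\to\infty}Q_X(x)/x^\alpha=0$, then $X^\alpha\in\mathcal{L}$.
   Context: For a nonnegative r.v. $X$, $Q_X(x)=-\log\mathbb{P}(X>x)$. $X\in\mathcal{SC}_\alpha$ ($0<\alpha<1$) if (i) $Q_X$ is eventually concave, (ii) $Q_X(x)/\log x\to\infty$, and (iii) there is $x_0>0$ such that $Q_X(x)/x^\alpha$ is nonincreasing on $[x_0,\infty)$. Class $\mathcal{L}$: nonnegative $Z$ with $\mathbb{P}(Z>x)>0$ for all $x$ and $\mathbb{P}(Z>x+y)/\mathbb{P}(Z>x)\to1$ for some (all) $y>0$; $X\in\mathcal{L}^p$ ($p\ge1$) means $X^{1/p}\in\mathcal{L}$. *)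

From HB Require Import structures.
From mathcomp Require Import all_boot all_order all_algebra.
From mathcomp Require Import all_classical all_reals all_analysis.
Set Implicit Arguments. Unset Strict Implicit. Unset Printing Implicit Defensive.
Import Order.TTheory GRing.Theory Num.Theory.
Import numFieldNormedType.Exports.
Local Open Scope classical_set_scope.
Local Open Scope ring_scope.

Section Defs.
Context (d : measure_display) (T : measurableType d) (R : realType)
        (P : probability T R).

Definition tail (Z : T -> R) (x : R) : R := fine (P [set t | x < Z t]).

Definition Qf (Z : T -> R) (x : R) : R := - ln (tail Z x).

Definition eventually_concave (f : R -> R) : Prop :=
  exists a : R, forall x y t : R, a <= x -> a <= y -> 0 <= t -> t <= 1 ->
    (1 - t) * f x + t * f y <= f ((1 - t) * x + t * y).

Definition SC (alpha : R) (X : T -> R) : Prop :=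
  (forall t, 0 <= X t) /\
  (forall x, 0 < tail X x) /\
  eventually_concave (Qf X) /\
  ((fun x => Qf X x / ln x) x @[x --> +oo] --> +oo) /\
  (exists x0 : R, 0 < x0 /\
     forall x y : R, x0 <= x -> x <= y ->
       Qf X y / y `^ alpha <= Qf X x / x `^ alpha).

Definition Lclass (Z : T -> R) : Prop :=
  (forall t, 0 <= Z t) /\
  (forall x, 0 < tail Z x) /\
  (forall y : R, 0 < y ->
     (fun x => tail Z (x + y) / tail Z x) x @[x --> +oo] --> (1 : R)).

Definition Lp (p : R) (X : T -> R) : Prop :=
  Lclass (fun t => X t `^ (p^-1)).

End Defs.

(* Write u = x^(1/beta) and v = (x + y)^(1/beta).  Beyond its concavity
   threshold, Q lies below its chord from a fixed base point b, which gives
   Q(v) - Q(u) <= 2 (v - u) Q(u) / u as soon as u >= 2b.  Here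
   (v - u) / u = O(1/x), while Q(u) = o(u^beta) = o(x), so Q(v) - Q(u) -> 0,
   i.e. P(X^beta > x + y) / P(X^beta > x) -> 1.  Both parts supply
   Q(u) = o(u^beta): in (i) because Q(u) <= C u^alpha with alpha < beta. *)

From HB Require Import structures.
From mathcomp Require Import all_boot all_order all_algebra.
From mathcomp Require Import all_classical all_reals all_analysis.
From mathcomp Require Import ring lra.
Set Implicit Arguments. Unset Strict Implicit. Unset Printing Implicit Defensive.
Import Order.TTheory GRing.Theory Num.Theory.
Import numFieldNormedType.Exports.
Local Open Scope classical_set_scope.
Local Open Scope ring_scope.

Section ConcaveIncrements.
Variable R : realType.
Implicit Types (q : R -> R) (a b u v x y : R).

Definition concave_above a q : Prop :=
  forall x y t : R, a <= x -> a <= y -> 0 <= t -> t <= 1 ->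
    (1 - t) * q x + t * q y <= q ((1 - t) * x + t * y).

Definition littleo_powR q (beta : R) : Prop :=
  forall e, 0 < e -> \forall u \near +oo, q u <= e * u `^ beta.

Lemma concave_above_slope a q b u v : concave_above a q ->
  a <= b -> b < u -> u <= v ->
  (u - b) * (q v - q u) <= (v - u) * (q u - q b).
Proof.
move=> qcc ab bu uv; have vb : 0 < v - b by lra.
set t := (u - b) / (v - b).
have t0 : 0 <= t by rewrite divr_ge0 //; lra.
have t1 : t <= 1 by rewrite ler_pdivrMr //; lra.
have := qcc b v t ab ltac:(lra) t0 t1.
have -> : (1 - t) * b + t * v = u by rewrite /t; field; lra.
move=> qu_ge.
suff : (u - b) * (q v - q b) <= (v - b) * (q u - q b) by lra.
have -> : u - b = t * (v - b) by rewrite /t divfK //; lra.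
have : 0 <= (v - b) * (q u - q b - t * (q v - q b)) by apply: mulr_ge0; lra.
lra.
Qed.

Lemma concave_above_increment a q b u v : concave_above a q ->
  a <= b -> 0 < b -> 0 <= q b -> 2 * b <= u -> u <= v -> q u <= q v ->
  u * (q v - q u) <= 2 * (v - u) * q u.
Proof.
move=> qcc ab b0 qb0 bu uv quv.
have slope := concave_above_slope qcc ab (ltac:(lra) : b < u) uv.
have : (v - u) * (q u - q b) <= (v - u) * q u by apply: ler_wpM2l; lra.
have : 0 <= (u - 2 * b) * (q v - q u) by apply: mulr_ge0; lra.
move: slope; lra.
Qed.

Lemma powR1D_le (p s : R) : 1 <= p -> 0 <= s -> s <= 1 ->
  (1 + s) `^ p <= 1 + p * s * expR p.
Proof.
move=> p1 s0 s1; have ps0 : 0 <= p * s by apply: mulr_ge0; lra.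
have -> : (1 + s) `^ p = expR (p * ln (1 + s)) by rewrite /powR gt_eqF //; lra.
have le_ps : expR (p * ln (1 + s)) <= expR (p * s).
  by rewrite ler_expR; apply: ler_wpM2l; [lra | apply: le_ln1Dx; lra].
have le_p : expR (p * s) <= expR p.
  by rewrite ler_expR -[leRHS]mulr1; apply: ler_wpM2l; lra.
(* [1 - ps <= e^(-ps)], i.e. [e^(ps) - 1 <= ps e^(ps)] *)
have expR_ps : expR (p * s) * (1 - p * s) <= 1.
  have := ler_wpM2l (ltW (expR_gt0 (p * s))) (expR_ge1Dx (- (p * s))).
  by rewrite expRN mulfV ?gt_eqF ?expR_gt0 // addrC.
have : p * s * expR (p * s) <= p * s * expR p by apply: ler_wpM2l.
lra.
Qed.

Lemma powRD_sub_le (p x y : R) : 1 <= p -> 0 < y -> y <= x ->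
  (x + y) `^ p - x `^ p <= p * y * expR p * (x `^ p / x).
Proof.
move=> p1 y0 yx; have x0 : 0 < x by lra.
set s := y / x.
have s0 : 0 <= s by rewrite divr_ge0 //; lra.
have s1 : s <= 1 by rewrite ler_pdivrMr // mul1r.
have -> : x + y = x * (1 + s) by rewrite /s mulrDr mulr1 mulrC divfK // gt_eqF.
rewrite powRM; [|lra|lra].
have -> : p * y * expR p * (x `^ p / x) = x `^ p * (p * s * expR p).
  by rewrite /s; field; rewrite gt_eqF.
have := ler_wpM2l (powR_ge0 x p) (powR1D_le p1 s0 s1); lra.
Qed.

Lemma concave_littleo_powR_increment a q beta y :
  0 < beta -> beta <= 1 -> 0 < y ->
  (forall x, 0 <= q x) -> {homo q : x z / x <= z} ->
  concave_above a q -> littleo_powR q beta ->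
  forall e, 0 < e -> \forall x \near +oo,
    q ((x + y) `^ beta^-1) - q (x `^ beta^-1) <= e.
Proof.
move=> b0 b1 y0 q0 qle qcc qo e e0.
set p := beta^-1; have p1 : 1 <= p by rewrite invf_ge1.
have bp : beta * p = 1 by rewrite mulfV ?gt_eqF.
set b := Num.max a 1; set K := 2 * p * y * expR p.
have K0 : 0 < K by rewrite !mulr_gt0 ?expR_gt0 //; lra.
have [M [_ qM]] := qo (e / K) (divr_gt0 e0 K0).
set c := Num.max M (2 * b).
have b1' : 1 <= b by rewrite le_max lexx orbT.
have Mc : M <= c by rewrite le_max lexx.
have bc : 2 * b <= c by rewrite le_max lexx orbT.
exists (Num.max (c `^ beta) y); split; first exact: num_real.
move=> x; rewrite gt_max => /andP[cx yx].
have x0 : 0 < x by lra.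
set u := x `^ p; set v := (x + y) `^ p.
have u0 : 0 < u by rewrite powR_gt0.
have uc : c < u.
  have -> : c = (c `^ beta) `^ p.
    by rewrite -powRrM bp powRr1 //; lra.
  by apply: gt0_ltr_powR; rewrite ?nnegrE ?powR_ge0 ?invr_gt0 //; lra.
have uv : u <= v by apply: ge0_ler_powR; rewrite ?nnegrE; lra.
have qu : q u <= e / K * x.
  have <- : u `^ beta = x by rewrite -powRrM mulrC bp powRr1 // ltW.
  by apply: qM; lra.
have incr : u * (q v - q u) <= 2 * (v - u) * q u.
  by apply: (concave_above_increment (b := b) qcc);
    rewrite ?le_max ?lexx ?q0 ?qle //; lra.
have vu : v - u <= p * y * expR p * (u / x) by apply: powRD_sub_le; lra.
have : 2 * (v - u) * q u <= 2 * (p * y * expR p * (u / x)) * (e / K * x).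
  by apply: ler_pM; [lra | exact: q0 | lra | exact: qu].
have -> : 2 * (p * y * expR p * (u / x)) * (e / K * x) = u * e.
  by rewrite /K; field; rewrite !gt_eqF ?expR_gt0 //; lra.
move=> uqe; rewrite -(ler_pM2l u0); lra.
Qed.

Lemma littleo_powR_of_le q (alpha beta C x0 : R) : alpha < beta -> 0 < x0 ->
  0 <= C -> (forall u, x0 <= u -> q u <= C * u `^ alpha) -> littleo_powR q beta.
Proof.
move=> ab x00 C0 qC e e0.
set g := beta - alpha; have g0 : 0 < g by rewrite subr_gt0.
have Ce0 : 0 <= C / e by rewrite divr_ge0 //; lra.
exists (Num.max x0 ((C / e) `^ g^-1)); split; first exact: num_real.
move=> u; rewrite gt_max => /andP[xu Cu]; have u0 : 0 < u by lra.
have Ceg : C / e <= u `^ g.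
  have -> : C / e = ((C / e) `^ g^-1) `^ g by rewrite -powRrM mulVf ?gt_eqF // powRr1.
  by apply: ge0_ler_powR; rewrite ?nnegrE ?powR_ge0 //; lra.
have -> : u `^ beta = u `^ g * u `^ alpha.
  by rewrite -powRD ?subrK //; apply/implyP => _; rewrite gt_eqF.
rewrite mulrA; apply: (le_trans (qC u (ltW xu))); apply: ler_wpM2r.
  exact: powR_ge0.
by rewrite mulrC -ler_pdivrMr.
Qed.

Lemma littleo_powR_of_cvg0 q beta :
  (fun x => q x / x `^ beta) x @[x --> +oo] --> (0 : R) -> littleo_powR q beta.
Proof.
move/cvgrPdist_le => qo e e0; near=> u.
have u0 : 0 < u by near: u; apply: nbhs_pinfty_gt; exact: num_real.
have : `|0 - q u / u `^ beta| <= e by near: u; exact: qo.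
rewrite sub0r normrN => /(le_trans (ler_norm _)).
by rewrite ler_pdivrMr // powR_gt0.
Unshelve. all: end_near.
Qed.

Lemma dist_div1_le_ln (A B : R) : 0 < B -> B <= A -> `|B / A - 1| <= ln A - ln B.
Proof.
move=> B0 BA; have A0 : 0 < A by lra.
set r := B / A.
have r0 : 0 < r by rewrite divr_gt0.
have r1 : r <= 1 by rewrite ler_pdivrMr // mul1r.
have -> : ln A - ln B = - ln r by rewrite ln_div ?posrE //; lra.
have := @le_ln1Dx R (r - 1) ltac:(lra); rewrite addrC subrK.
by rewrite ler0_norm; lra.
Qed.

End ConcaveIncrements.

Section Tails.
Context (d : measure_display) (T : measurableType d) (R : realType)
        (P : probability T R).

Lemma measurable_gt_rv (X : {RV P >-> R}) x : measurable [set t | x < X t].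
Proof.
rewrite -preimage_itvoy -[X @^-1` _]setTI.
by apply: (measurable_funPT X) => //; exact: measurable_itv.
Qed.

Lemma tailE (X : {RV P >-> R}) x : P [set t | x < X t] = (tail P X x)%:E.
Proof. by rewrite /tail fineK // fin_num_measure //; exact: measurable_gt_rv. Qed.

Lemma tail_le1 (X : {RV P >-> R}) x : tail P X x <= 1.
Proof. by rewrite -lee_fin -tailE probability_le1 //; exact: measurable_gt_rv. Qed.

Lemma tail_le (X : {RV P >-> R}) x y : x <= y -> tail P X y <= tail P X x.
Proof.
move=> xy; rewrite -lee_fin -!tailE.
apply: le_measure; rewrite ?inE; try exact: measurable_gt_rv.
by move=> t /= yt; exact: le_lt_trans xy yt.
Qed.

Lemma Qf_ge0 (X : {RV P >-> R}) x : 0 <= Qf P X x.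
Proof. by rewrite oppr_ge0 ln_le0 // tail_le1. Qed.

Lemma Qf_le (X : {RV P >-> R}) : (forall x, 0 < tail P X x) ->
  {homo Qf P X : x y / x <= y}.
Proof. by move=> tpos x y xy; rewrite lerN2 ler_ln ?posrE // tail_le. Qed.

Lemma tail_powR (X : T -> R) beta x : 0 < beta -> (forall t, 0 <= X t) ->
  0 <= x -> tail P (fun t => X t `^ beta) x = tail P X (x `^ beta^-1).
Proof.
move=> b0 X0 x0; rewrite /tail; congr (fine (P _)).
have bV0 : 0 < beta^-1 by rewrite invr_gt0.
apply/seteqP; split => t /= h.
- have := gt0_ltr_powR bV0 _ _ h; rewrite -powRrM mulfV ?gt_eqF // powRr1 //.
  by apply; rewrite nnegrE ?powR_ge0.
- have := gt0_ltr_powR b0 _ _ h; rewrite -powRrM mulVf ?gt_eqF // powRr1 //.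
  by apply; rewrite nnegrE ?powR_ge0.
Qed.

Lemma tail_powR_lt0 (X : T -> R) beta x : x < 0 ->
  tail P (fun t => X t `^ beta) x = 1.
Proof.
move=> x0; rewrite /tail.
have -> : [set t | x < X t `^ beta] = setT.
  by apply/seteqP; split => t //= _; exact: lt_le_trans x0 (powR_ge0 _ _).
by rewrite probability_setT.
Qed.

Lemma Lclass_powR (X : {RV P >-> R}) beta : 0 < beta -> beta <= 1 ->
  (forall t, 0 <= X t) -> (forall x, 0 < tail P X x) ->
  eventually_concave (Qf P X) -> littleo_powR (Qf P X) beta ->
  Lclass P (fun t => X t `^ beta).
Proof.
move=> b0 b1 X0 tpos [a qcc] qo; split; first by move=> t; exact: powR_ge0.
split.
  move=> x; have [x0|x0] := ltP x 0; first by rewrite tail_powR_lt0.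
  by rewrite tail_powR.
move=> y y0; apply/cvgrPdist_le => e e0.
have incr := concave_littleo_powR_increment b0 b1 y0 (Qf_ge0 X) (Qf_le tpos)
  qcc qo e0.
near=> x.
have x0 : 0 <= x by near: x; apply: nbhs_pinfty_ge; exact: num_real.
rewrite distrC !tail_powR //; last lra.
apply: le_trans (dist_div1_le_ln _ _) _ => //.
- apply: tail_le; apply: ge0_ler_powR; rewrite ?nnegrE ?invr_ge0; lra.
- suff : Qf P X ((x + y) `^ beta^-1) - Qf P X (x `^ beta^-1) <= e.
    by rewrite /Qf; lra.
  by near: x; exact: incr.
Unshelve. all: end_near.
Qed.

End Tails.

Theorem lemmaA6 (d : measure_display) (T : measurableType d) (R : realType)
    (P : probability T R) :
  (forall alpha beta : R, 0 < alpha -> alpha < beta -> beta <= 1 ->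
     forall X : {RV P >-> R}, SC P alpha X -> Lp P (beta^-1) X) /\
  (forall alpha : R, 0 < alpha -> alpha < 1 ->
     forall X : {RV P >-> R}, SC P alpha X ->
       (fun x => Qf P X x / x `^ alpha) x @[x --> +oo] --> (0 : R) ->
       Lclass P (fun t => X t `^ alpha)).
Proof.
split.
- move=> alpha beta a0 ab b1 X [X0 [tpos [qcc [_ [x0 [x00 Qdec]]]]]].
  rewrite /Lp invrK; apply: Lclass_powR => //; first lra.
  apply: (littleo_powR_of_le (C := Qf P X x0 / x0 `^ alpha) ab x00).
    by rewrite divr_ge0 ?powR_ge0 ?Qf_ge0.
  move=> u xu; rewrite -ler_pdivrMr ?powR_gt0 //; last lra.
  exact: Qdec.
- move=> alpha a0 a1 X [X0 [tpos [qcc _]]] Qo.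
  by apply: Lclass_powR => //; [lra | exact: littleo_powR_of_cvg0].
Qed.
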